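(* For all polynomials $f,g\in F[t]$ and all $a,b\in F$, $$\int_a^b (f*_\psi\partial_\psi g)(t)\,d_\psi t=(f*_\psi g)(b)-(f*_\psi g)(a)-\int_a^b\bigl((Df)*_\psi g\bigr)(t)\,d_\psi t,$$ where $D$ is the ordinary derivative.
   Context: Let $F=\mathbb R$ or $\mathbb C$ and $\psi=(\psi_n)_{n\ge0}$ a sequence in $F$ with all $\psi_n\neq0$; put $n_\psi:=\psi_{n-1}/\psi_n$ ($n\ge1$). On $F[t]$ define linear operators $\partial_\psi1=0$, $\partial_\psi t^n=n_\psi t^{n-1}$ ($n\ge1$), $\hat t_\psi t^n=\frac{n+1}{(n+1)_\psi}t^{n+1}$ ($n\ge0$). For $f=\sum_j a_jt^j$ and $g\in F[t]$ set $f*_\psi g:=\sum_j a_j\hat t_\psi^{\,j}g$. The $\psi$-antiderivative is the linear operator $\int_\psi t^n=\frac{1}{(n+1)_\psi}t^{n+1}$, and $\int_a^b h(t)\,d_\psi t:=H(b)-H(a)$ with $H=\int_\psi h$. *)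

(* F = R or C is generalised to an arbitrary numFieldType
   (which includes both; the statement is purely algebraic). *)
From HB Require Import structures.
From mathcomp Require Import all_boot all_order all_algebra.
Set Implicit Arguments. Unset Strict Implicit. Unset Printing Implicit Defensive.
Import Order.TTheory GRing.Theory Num.Theory.
Local Open Scope ring_scope.

Section PsiCalc.
Variables (F : numFieldType) (psi : nat -> F).

(* n_psi := psi_{n-1} / psi_n  (used for n >= 1) *)
Definition npsi (n : nat) : F := psi n.-1 / psi n.

(* partial_psi : 1 |-> 0, t^n |-> n_psi t^(n-1), extended linearly *)
Definition dpsi (p : {poly F}) : {poly F} :=
  \poly_(i < (size p).-1) (p`_i.+1 * npsi i.+1).

(* hat t_psi : t^n |-> (n+1)/(n+1)_psi t^(n+1), extended linearly *)
Definition tpsi (p : {poly F}) : {poly F} :=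
  \poly_(i < (size p).+1)
     (if i is j.+1 then p`_j * (j.+1)%:R / npsi j.+1 else 0).

Definition starpsi (f g : {poly F}) : {poly F} :=
  \sum_(j < size f) f`_j *: iter j tpsi g.

(* psi-antiderivative : t^n |-> t^(n+1) / (n+1)_psi *)
Definition ipsi (h : {poly F}) : {poly F} :=
  \poly_(i < (size h).+1)
     (if i is j.+1 then h`_j / npsi j.+1 else 0).

Definition pint (a b : F) (h : {poly F}) : F :=
  (ipsi h).[b] - (ipsi h).[a].

End PsiCalc.

From HB Require Import structures.
From mathcomp Require Import all_boot all_order all_algebra.
Import Order.TTheory GRing.Theory Num.Theory.
Local Open Scope ring_scope.

(* The proof rests on two facts about the operators d = dpsi and t = tpsi:
   - the Weyl relation  d (t p) = t (d p) + p,  which iterates to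
       d (t^j p) = t^j (d p) + j * t^(j-1) p;
   - the fundamental theorem  int_a^b (d h) d_psi t = h(b) - h(a),  since the
     psi-antiderivative undoes d up to the constant term.
   Summing the iterated Weyl relation against the coefficients of f gives the
   product rule  d (f *_psi g) = f *_psi (d g) + (Df) *_psi g.  Integrating it
   from a to b and using the fundamental theorem together with additivity of
   the psi-integral yields the theorem. *)

Section PsiCalculus.
Variables (F : numFieldType) (psi : nat -> F).
Hypothesis psi_neq0 : forall n : nat, psi n != 0.

Lemma npsi_neq0 n : npsi psi n != 0.
Proof. by rewrite /npsi mulf_neq0 ?invr_eq0. Qed.

Lemma coef_dpsi p i : (dpsi psi p)`_i = p`_i.+1 * npsi psi i.+1.
Proof.
rewrite coef_poly; case: ltnP => // size_le.
by rewrite nth_default ?mul0r // (leq_trans (leqSpred _)) // ltnS.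
Qed.

Lemma coef_tpsi p i : (tpsi psi p)`_i =
  if i is j.+1 then p`_j * j.+1%:R / npsi psi j.+1 else 0.
Proof.
rewrite coef_poly; case: ltnP => //; case: i => // j size_le.
by rewrite nth_default ?mul0r.
Qed.

Lemma coef_ipsi p i : (ipsi psi p)`_i =
  if i is j.+1 then p`_j / npsi psi j.+1 else 0.
Proof.
rewrite coef_poly; case: ltnP => //; case: i => // j size_le.
by rewrite nth_default ?mul0r.
Qed.

Lemma dpsi0 : dpsi psi 0 = 0.
Proof. by apply/polyP => i; rewrite coef_dpsi !coef0 mul0r. Qed.

Lemma dpsiD p q : dpsi psi (p + q) = dpsi psi p + dpsi psi q.
Proof. by apply/polyP => i; rewrite coefD !coef_dpsi coefD mulrDl. Qed.

Lemma dpsiZ c p : dpsi psi (c *: p) = c *: dpsi psi p.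
Proof. by apply/polyP => i; rewrite coefZ !coef_dpsi coefZ mulrA. Qed.

Lemma tpsiD p q : tpsi psi (p + q) = tpsi psi p + tpsi psi q.
Proof.
apply/polyP => -[|j]; rewrite coefD !coef_tpsi ?addr0 //.
by rewrite coefD !mulrDl.
Qed.

Lemma tpsiMn p n : tpsi psi (p *+ n) = tpsi psi p *+ n.
Proof.
apply/polyP => -[|j]; rewrite coefMn !coef_tpsi ?mul0rn //.
by rewrite coefMn !mulrnAl.
Qed.

Lemma ipsiB p q : ipsi psi (p - q) = ipsi psi p - ipsi psi q.
Proof.
apply/polyP => -[|j]; rewrite coefB !coef_ipsi ?subr0 //.
by rewrite coefB mulrBl.
Qed.

Lemma pintB a b p q : pint psi a b (p - q) = pint psi a b p - pint psi a b q.
Proof. by rewrite /pint ipsiB !hornerD !hornerN !opprD !opprK addrACA. Qed.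

Lemma ipsi_dpsi p : ipsi psi (dpsi psi p) = p - (p`_0)%:P.
Proof.
apply/polyP => -[|j]; rewrite coef_ipsi coefB coefC /= ?subrr //.
by rewrite coef_dpsi subr0 mulfK ?npsi_neq0.
Qed.

Lemma pint_dpsi a b p : pint psi a b (dpsi psi p) = p.[b] - p.[a].
Proof.
rewrite /pint ipsi_dpsi !hornerD !hornerN !hornerC.
by rewrite opprD opprK addrACA addNr addr0.
Qed.

Lemma dpsi_tpsi p : dpsi psi (tpsi psi p) = tpsi psi (dpsi psi p) + p.
Proof.
apply/polyP => -[|j]; rewrite coefD coef_dpsi !coef_tpsi.
  by rewrite mulfVK ?npsi_neq0 // mulr1 add0r.
rewrite coef_dpsi mulfVK ?npsi_neq0 // [in RHS]mulrAC mulfK ?npsi_neq0 //.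
by rewrite !mulr_natr -mulrSr.
Qed.

Lemma dpsi_iter_tpsi j p : dpsi psi (iter j (tpsi psi) p) =
  iter j (tpsi psi) (dpsi psi p) + iter j.-1 (tpsi psi) p *+ j.
Proof.
elim: j => [|j IHj] /=; first by rewrite addr0.
rewrite dpsi_tpsi IHj tpsiD tpsiMn.
by case: j {IHj} => [|j] /=; rewrite ?mulr0n ?addr0 // -addrA -mulrSr.
Qed.

Lemma starpsiE (f g : {poly F}) {n} : (size f <= n)%N ->
  starpsi psi f g = \sum_(j < n) f`_j *: iter j (tpsi psi) g.
Proof.
move=> size_le; rewrite /starpsi.
rewrite (big_ord_widen n (fun j => f`_j *: iter j (tpsi psi) g) size_le).
rewrite big_mkcond.
apply: eq_bigr => i _; case: ltnP => // size_le_i.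
by rewrite nth_default ?scale0r.
Qed.

Lemma dpsi_starpsi (f g : {poly F}) : dpsi psi (starpsi psi f g) =
  starpsi psi f (dpsi psi g) + starpsi psi f^`() g.
Proof.
have size_deriv : (size f^`() <= size f)%N.
  by case: (eqVneq f 0) => [->|/lt_size_deriv/ltnW //]; rewrite deriv0 size_poly0.
rewrite !(starpsiE _ _ (leqnSn (size f))) (starpsiE _ _ size_deriv).
rewrite (big_morph _ dpsiD dpsi0).
under eq_bigr => j _ do rewrite dpsiZ dpsi_iter_tpsi scalerDr.
rewrite big_split /=; congr (_ + _).
rewrite big_ord_recl /= mulr0n scaler0 add0r; apply: eq_bigr => j _.
by rewrite coef_deriv -scalerMnr scalerMnl.
Qed.

End PsiCalculus.

Theorem mainTheorem7 (F : numFieldType) (psi : nat -> F)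
  (hpsi : forall n : nat, psi n != 0) (f g : {poly F}) (a b : F) :
  pint psi a b (starpsi psi f (dpsi psi g)) =
  (starpsi psi f g).[b] - (starpsi psi f g).[a]
  - pint psi a b (starpsi psi (deriv f) g).
Proof.
by rewrite -(@pint_dpsi _ _ hpsi) (@dpsi_starpsi _ _ hpsi) -pintB addrK.
Qed.
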